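(* Fix $x \in \mathbf{X}$ and let $(k_0,j_0)$ be the unique pair with $x \in \mathbf{X}_{k_0,j_0}$. Let $\epsilon,\delta \ge 0$. If $H_{TP}(x) \le \delta$ and $H_{WP}(x) \le \epsilon$, then $H_{CIL}(x) \le \epsilon + \delta$.
   Context: Class incremental learning setting. $\mathbf{X}$ is an input domain which is the disjoint union of task domains $\mathbf{X}_1,\dots,\mathbf{X}_T$ ($\mathbf{X}_k\cap\mathbf{X}_{k'}=\emptyset$ for $k\ne k'$), and each $\mathbf{X}_k$ is the disjoint union of class domains $\mathbf{X}_{k,j}$ ($\mathbf{X}_{k,j}\cap\mathbf{X}_{k,j'}=\emptyset$ for $j\neq j'$). $D$ is a fixed conditioning event (the data/trained model), and $\mathbf{P}(x\in A\mid D)$ denotes the probability, under a probability measure conditioned on $D$, of the event that $x$ lies in $A$; $\mathbf{P}(x\in\mathbf{X}_{k,j}\mid x\in\mathbf{X}_k, D)$ is the corresponding conditional probability (within-task prediction, WP), $\mathbf{P}(x\in\mathbf{X}_k\mid D)$ the task-id prediction (TP) probability, and $\mathbf{P}(x\in\mathbf{X}_{k,j}\mid D)$ the class-incremental (CIL) probability. The cross-entropy of distributions $p,q$ is $H(p,q)=-\sum_i p_i\log q_i$. For $x\in\mathbf{X}_{k_0,j_0}$, with one-hot ground-truth labels, define $H_{CIL}(x)=H(y,\{\mathbf{P}(x\in\mathbf{X}_{k,j}\mid D)\}_{k,j})=-\log\mathbf{P}(x\in\mathbf{X}_{k_0,j_0}\mid D)$, $H_{WP}(x)=H(\tilde y,\{\mathbf{P}(x\in\mathbf{X}_{k_0,j}\mid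 x\in\mathbf{X}_{k_0},D)\}_j)=-\log\mathbf{P}(x\in\mathbf{X}_{k_0,j_0}\mid x\in\mathbf{X}_{k_0},D)$, and $H_{TP}(x)=H(\bar y,\{\mathbf{P}(x\in\mathbf{X}_k\mid D)\}_k)=-\log\mathbf{P}(x\in\mathbf{X}_{k_0}\mid D)$, where $y,\tilde y,\bar y$ are the one-hot vectors at $(k_0,j_0)$, $j_0$ (within task $k_0$) and $k_0$ respectively. *)

From mathcomp Require Import all_boot all_order all_algebra.
From mathcomp Require Import all_classical all_reals all_analysis.
Set Implicit Arguments. Unset Strict Implicit. Unset Printing Implicit Defensive.
Import Order.TTheory GRing.Theory Num.Theory.
Local Open Scope classical_set_scope.
Local Open Scope ring_scope.

(* Conditional probability P(A | B) = P(A ∩ B) / P(B) (real-valued;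
   it is 0 when P(B) = 0). *)
Definition condp d (T : measurableType d) (R : realType)
  (P : probability T R) (A B : set T) : R :=
  fine (P (A `&` B)) / fine (P B).

(* -log p as an extended real: +oo at p = 0 (so a cross-entropy bound
   "<= delta" forces the probability to be positive). *)
Definition nlog (R : realType) (p : R) : \bar R :=
  if p == 0 then +oo%E else (- ln p)%:E.

Definition task_dom (X : Type) (nT : nat) (nc : 'I_nT -> nat)
  (Xc : forall k : 'I_nT, 'I_(nc k) -> set X) (k : 'I_nT) : set X :=
  \bigcup_(j in [set: 'I_(nc k)]) Xc k j.

(* Cross-entropies with one-hot ground truth at (k0, j0), for the random
   element xi : T -> X ("x"), conditioned on the event D. *)
Definition H_CIL d (T : measurableType d) (R : realType) (P : probability T R)
  (D : set T) (X : Type) (xi : T -> X) (nT : nat) (nc : 'I_nT -> nat)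
  (Xc : forall k : 'I_nT, 'I_(nc k) -> set X) (k0 : 'I_nT) (j0 : 'I_(nc k0))
  : \bar R := nlog (condp P (xi @^-1` Xc k0 j0) D).

Definition H_WP d (T : measurableType d) (R : realType) (P : probability T R)
  (D : set T) (X : Type) (xi : T -> X) (nT : nat) (nc : 'I_nT -> nat)
  (Xc : forall k : 'I_nT, 'I_(nc k) -> set X) (k0 : 'I_nT) (j0 : 'I_(nc k0))
  : \bar R :=
  nlog (condp P (xi @^-1` Xc k0 j0) (xi @^-1` task_dom Xc k0 `&` D)).

Definition H_TP d (T : measurableType d) (R : realType) (P : probability T R)
  (D : set T) (X : Type) (xi : T -> X) (nT : nat) (nc : 'I_nT -> nat)
  (Xc : forall k : 'I_nT, 'I_(nc k) -> set X) (k0 : 'I_nT) : \bar R :=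
  nlog (condp P (xi @^-1` task_dom Xc k0) D).

From mathcomp Require Import all_boot all_order all_algebra.
From mathcomp Require Import all_classical all_reals all_analysis.
Import Order.TTheory GRing.Theory Num.Theory.
Local Open Scope classical_set_scope.
Local Open Scope ring_scope.

(* Since X_{k0,j0} is contained in X_{k0}, P(X_{k0,j0} | D) factors as
   P(X_{k0,j0} | X_{k0}, D) * P(X_{k0} | D), and -log turns this product into
   the sum H_WP + H_TP.  When P(X_{k0} | D) = 0 the chain rule degenerates, but
   then H_TP = +oo and the bound is trivial. *)

Lemma nlog_neq_ninfty (R : realType) (p : R) : nlog p != -oo%E.
Proof. by rewrite /nlog; case: ifP. Qed.

Lemma nlog0 (R : realType) : nlog (0 : R) = +oo%E.
Proof. by rewrite /nlog eqxx. Qed.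

Lemma nlogM (R : realType) (p q : R) : 0 <= p -> 0 <= q ->
  nlog (p * q) = (nlog p + nlog q)%E.
Proof.
move=> p_ge0 q_ge0.
have [->|p_neq0] := eqVneq p 0; first by rewrite mul0r nlog0 addye ?nlog_neq_ninfty.
have [->|q_neq0] := eqVneq q 0; first by rewrite mulr0 nlog0 addey ?nlog_neq_ninfty.
have [p_gt0 q_gt0] : 0 < p /\ 0 < q by rewrite !lt0r p_neq0 q_neq0.
by rewrite /nlog mulf_eq0 (negPf p_neq0) (negPf q_neq0) lnM ?posrE // opprD.
Qed.

Section ConditionalProbability.
Context {d : measure_display} {T : measurableType d} {R : realType}.
Variable P : probability T R.

Lemma condp_ge0 (A B : set T) : 0 <= condp P A B.
Proof. by rewrite /condp divr_ge0 // fine_ge0. Qed.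

Lemma condp_chain (A B D : set T) : fine (P (B `&` D)) != 0 ->
  condp P A (B `&` D) * condp P B D = condp P (A `&` B) D.
Proof. by move=> PBD_neq0; rewrite /condp setIA mulrA divfK. Qed.

Lemma nlog_condp_chain (A B D : set T) :
  (nlog (condp P (A `&` B) D)
     <= nlog (condp P A (B `&` D)) + nlog (condp P B D))%E.
Proof.
have [PBD0|PBD_neq0] := eqVneq (fine (P (B `&` D))) 0.
  by rewrite {3}/condp PBD0 mul0r nlog0 addey ?nlog_neq_ninfty ?leey.
by rewrite -condp_chain // nlogM ?condp_ge0.
Qed.

End ConditionalProbability.

Lemma class_sub_task_dom (X : Type) (nT : nat) (nc : 'I_nT -> nat)
  (Xc : forall k : 'I_nT, 'I_(nc k) -> set X) (k : 'I_nT) (j : 'I_(nc k)) :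
  Xc k j `<=` task_dom Xc k.
Proof. by move=> x Xx; exists j. Qed.

(* Only the inclusion X_{k0,j0} ⊆ X_{k0} is needed. *)
Theorem theorem1 (R : realType) (d : measure_display) (T : measurableType d)
  (P : probability T R) (D : set T) (X : Type) (xi : T -> X)
  (nT : nat) (nc : 'I_nT -> nat) (Xc : forall k : 'I_nT, 'I_(nc k) -> set X)
  (mD : measurable D)
  (mXc : forall k j, measurable (xi @^-1` Xc k j))
  (cover : [set: X] = \bigcup_(k in [set: 'I_nT]) task_dom Xc k)
  (disj_task : forall k k' : 'I_nT, k != k' ->
     task_dom Xc k `&` task_dom Xc k' = set0)
  (disj_class : forall (k : 'I_nT) (j j' : 'I_(nc k)), j != j' ->
     Xc k j `&` Xc k j' = set0)
  (x : X) (k0 : 'I_nT) (j0 : 'I_(nc k0)) (hx : Xc k0 j0 x)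
  (eps delta : R) (heps : 0 <= eps) (hdelta : 0 <= delta) :
  (H_TP P D xi Xc k0 <= delta%:E)%E ->
  (H_WP P D xi Xc j0 <= eps%:E)%E ->
  (H_CIL P D xi Xc j0 <= (eps + delta)%:E)%E.
Proof.
move=> HTP HWP; rewrite /H_CIL.
have -> : xi @^-1` Xc k0 j0 = xi @^-1` Xc k0 j0 `&` xi @^-1` task_dom Xc k0.
  by rewrite -preimage_setI setIidl //; exact: class_sub_task_dom.
apply: le_trans (nlog_condp_chain P _ _ D) _.
by rewrite EFinD leeD.
Qed.
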